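(* Let $M(C,\bar\xi,\pi)$ be a Myller configuration with Darboux frame $(\bar\xi,\bar\mu,\bar v)$ and invariants $G,K,T$ such that $(G(s),T(s))\neq(0,0)$ for all $s$, and let $\bar W_r$ be its unit RD-vector field. Then $C$ is a $W_r$-helix in $M$ if and only if $C$ is a $\bar\mu$-helix in $M$.
   Context: Let $C$ be a smooth curve in $E^3$ parametrized by arclength $s$; primes denote $d/ds$. A Myller configuration $M(C,\bar\xi,\pi)$ consists of a smooth unit vector field $\bar\xi$ along $C$ and a smooth oriented plane field $\pi$ with $\bar\xi\in\pi$; $\bar v$ is the unit normal of $\pi$, $\bar\mu=\bar v\times\bar\xi$, and $\bar\xi'=G\bar\mu+K\bar v$, $\bar\mu'=-G\bar\xi+T\bar v$, $\bar v'=-K\bar\xi-T\bar\mu$. The rectifying-type Darboux vector (RD-vector) is $W_r=T\bar\xi+G\bar v$, $\bar W_r=W_r/\|W_r\|$. $C$ is a $W_r$-helix if $\langle\bar W_r,\bar l_r\rangle$ is constant for some constant unit vector $\bar l_r$; $C$ is a $\bar\mu$-helix if $\langle\bar\mu,\bar d_\mu\rangle$ is constant for some constant unit vector $\bar d_\mu$. *)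

From Stdlib Require Import Reals.
From Coquelicot Require Import Coquelicot.
Open Scope R_scope.

Definition vec3 : Type := (R * R * R)%type.
Definition vx (u : vec3) : R := fst (fst u).
Definition vy (u : vec3) : R := snd (fst u).
Definition vz (u : vec3) : R := snd u.

Definition vadd (u w : vec3) : vec3 := (vx u + vx w, vy u + vy w, vz u + vz w).
Definition vscale (a : R) (u : vec3) : vec3 := (a * vx u, a * vy u, a * vz u).
Definition vdot (u w : vec3) : R := vx u * vx w + vy u * vy w + vz u * vz w.
Definition vcross (u w : vec3) : vec3 :=
  (vy u * vz w - vz u * vy w,
   vz u * vx w - vx u * vz w,
   vx u * vy w - vy u * vx w).
Definition vnorm (u : vec3) : R := sqrt (vdot u u).

Definition inI (a b s : R) : Prop := a < s < b.

Definition smooth_on (a b : R) (f : R -> vec3) : Prop :=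
  forall (n : nat) (s : R), inI a b s ->
    ex_derive_n (fun t => vx (f t)) n s /\
    ex_derive_n (fun t => vy (f t)) n s /\
    ex_derive_n (fun t => vz (f t)) n s.

Definition vderiv (f : R -> vec3) (s : R) (d : vec3) : Prop :=
  is_derive (fun t => vx (f t)) s (vx d) /\
  is_derive (fun t => vy (f t)) s (vy d) /\
  is_derive (fun t => vz (f t)) s (vz d).

(* The plane
   field pi is encoded by its unit normal v (pi = v^perp, oriented by v). *)
Definition myller_config (a b : R) (r xi mu v : R -> vec3) (G K T : R -> R) : Prop :=
  smooth_on a b r /\ smooth_on a b xi /\ smooth_on a b v /\
  (forall s, inI a b s ->
     (exists d, vderiv r s d /\ vnorm d = 1) /\
     vnorm (xi s) = 1 /\ vnorm (v s) = 1 /\ vdot (xi s) (v s) = 0 /\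
     mu s = vcross (v s) (xi s) /\
     vderiv xi s (vadd (vscale (G s) (mu s)) (vscale (K s) (v s))) /\
     vderiv mu s (vadd (vscale (- G s) (xi s)) (vscale (T s) (v s))) /\
     vderiv v s (vadd (vscale (- K s) (xi s)) (vscale (- T s) (mu s)))).

Definition Wr (xi v : R -> vec3) (G T : R -> R) (s : R) : vec3 :=
  vadd (vscale (T s) (xi s)) (vscale (G s) (v s)).
Definition Wr_bar (xi v : R -> vec3) (G T : R -> R) (s : R) : vec3 :=
  vscale (/ vnorm (Wr xi v G T s)) (Wr xi v G T s).

Definition is_helix_along (a b : R) (f : R -> vec3) : Prop :=
  exists (l : vec3) (c : R), vnorm l = 1 /\
    forall s, inI a b s -> vdot (f s) l = c.

Definition Wr_helix (a b : R) (xi v : R -> vec3) (G T : R -> R) : Prop :=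
  is_helix_along a b (Wr_bar xi v G T).
Definition mu_helix (a b : R) (mu : R -> vec3) : Prop :=
  is_helix_along a b mu.

(* Put m = sqrt (G^2 + T^2) = |W_r| > 0 and n = mu' / m = (- G xi + T v) / m.
   Then (mu, n, W_r/|W_r|) is a Frenet frame of the spherical curve mu:
   mu' = m n, n' = - m mu + tau Wbar_r and Wbar_r' = - tau n, where
   tau = - (K + theta') and theta is the angle of W_r in the (xi, v)-plane.
   So the theorem says that the tangent and the binormal of a Frenet frame make
   constant angles with a fixed direction simultaneously.
   If mu.d is constant then n.d = 0, hence Wbar_r.d is constant. Conversely, if
   Wbar_r.l = c then tau (n.l) = 0. Near a point where tau <> 0, n.l vanishes,
   so mu.l = tau c / m and (mu.l)^2 = 1 - c^2 > 0. Hence the continuous function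
   (tau c / m)^2 only takes the values 0 and 1 - c^2: either tau never vanishes,
   and then n.l = 0 and mu.l is constant, or tau vanishes identically, and then
   Wbar_r is constant and orthogonal to mu. *)

From Stdlib Require Import Reals Lra Classical.
From Coquelicot Require Import Coquelicot.
Open Scope R_scope.

(** * Real functions on an open interval *)

Lemma is_derive_eq (f : R -> R) (s d d' : R) :
  is_derive f s d -> d = d' -> is_derive f s d'.
Proof. intros H <-; exact H. Qed.

Lemma is_derive_unique_val (f : R -> R) (s d1 d2 : R) :
  is_derive f s d1 -> is_derive f s d2 -> d1 = d2.
Proof. intros H1 H2; rewrite <- (is_derive_unique f s d1 H1); now apply is_derive_unique. Qed.

(* Coquelicot states these rules over abstract normed modules; on [R -> R] they
   only apply once the functions are given explicitly. *)
Lemma is_derive_Rplus (f g : R -> R) (s df dg : R) :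
  is_derive f s df -> is_derive g s dg -> is_derive (fun t => f t + g t) s (df + dg).
Proof. apply (is_derive_plus f g). Qed.

Lemma is_derive_Rmult (f g : R -> R) (s df dg : R) :
  is_derive f s df -> is_derive g s dg ->
  is_derive (fun t => f t * g t) s (df * g s + f s * dg).
Proof. intros Hf Hg; apply (is_derive_mult f g); auto using Rmult_comm. Qed.

Lemma is_derive_Ropp (f : R -> R) (s df : R) :
  is_derive f s df -> is_derive (fun t => - f t) s (- df).
Proof. apply (is_derive_opp f). Qed.

Lemma continuous_Rplus (f g : R -> R) (s : R) :
  continuous f s -> continuous g s -> continuous (fun t => f t + g t) s.
Proof. apply (continuous_plus f g). Qed.

Lemma continuous_Rmult (f g : R -> R) (s : R) :
  continuous f s -> continuous g s -> continuous (fun t => f t * g t) s.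
Proof. apply (continuous_mult f g). Qed.

Lemma continuous_Ropp (f : R -> R) (s : R) :
  continuous f s -> continuous (fun t => - f t) s.
Proof. apply (continuous_opp f). Qed.

Lemma continuous_Rminus (f g : R -> R) (s : R) :
  continuous f s -> continuous g s -> continuous (fun t => f t - g t) s.
Proof.
  intros Hf Hg; apply (continuous_Rplus f (fun t => - g t)); [| apply continuous_Ropp];
    assumption.
Qed.

Lemma continuous_Rsqr (f : R -> R) (s : R) :
  continuous f s -> continuous (fun t => f t ^ 2) s.
Proof.
  intros Hf; apply (continuous_ext (fun t => f t * f t)).
  { intros t; change (f t * f t = f t ^ 2); ring. }
  now apply continuous_Rmult.
Qed.

Lemma is_derive_inv_sqrt (f : R -> R) (s df : R) :
  is_derive f s df -> 0 < f s ->
  is_derive (fun t => / sqrt (f t)) s (- df / (2 * sqrt (f s) * f s)).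
Proof.
  intros Hf Hpos.
  assert (Hsqrt : 0 < sqrt (f s)) by now apply sqrt_lt_R0.
  assert (Hd : is_derive (fun t => sqrt (f t)) s (df / (2 * sqrt (f s))))
    by now apply is_derive_sqrt.
  eapply is_derive_eq; [apply (is_derive_inv _ _ _ Hd); lra |].
  rewrite pow2_sqrt by lra. field; split; lra.
Qed.

Lemma continuous_locally_neq0 (f : R -> R) (s : R) :
  continuous f s -> f s <> 0 -> locally s (fun u => f u <> 0).
Proof. intros Hc Hs; exact (Hc _ (open_neq 0 (f s) Hs)). Qed.

Lemma locally_inI (a b s : R) : inI a b s -> locally s (inI a b).
Proof.
  intros [Has Hsb]. apply (locally_interval _ s a b); [exact Has | exact Hsb |].
  intros y Hay Hyb; split; assumption.
Qed.

Lemma inI_between (a b s t x : R) :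
  inI a b s -> inI a b t -> Rmin s t <= x <= Rmax s t -> inI a b x.
Proof.
  unfold inI, Rmin, Rmax; intros Hs Ht Hx.
  destruct (Rle_dec s t); lra.
Qed.

Lemma is_derive_0_constant_on (a b : R) (f : R -> R) :
  (forall s, inI a b s -> is_derive f s 0) ->
  forall s t, inI a b s -> inI a b t -> f t = f s.
Proof.
  intros Hd s t Hs Ht.
  destruct (MVT_gen f s t (fun _ => 0)) as [c [_ Hc]].
  - intros x Hx; apply Hd, (inI_between a b s t x Hs Ht); lra.
  - intros x Hx; apply continuity_pt_filterlim, (ex_derive_continuous f).
    exists 0; apply Hd, (inI_between a b s t x Hs Ht Hx).
  - lra.
Qed.

Lemma is_derive_locally_constant (f : R -> R) (s c : R) :
  locally s (fun t => f t = c) -> is_derive f s 0.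
Proof.
  intros H. apply (is_derive_ext_loc (fun _ => c)); [| apply (is_derive_const c)].
  eapply filter_imp; [| exact H]; intros t Ht; now rewrite Ht.
Qed.

Lemma is_derive_constant_on (a b c s : R) (f : R -> R) :
  (forall u, inI a b u -> f u = c) -> inI a b s -> is_derive f s 0.
Proof.
  intros Hf Hs; apply (is_derive_locally_constant f s c).
  eapply filter_imp; [exact Hf | exact (locally_inI a b s Hs)].
Qed.

Lemma IVT_inI (a b s t y : R) (f : R -> R) :
  (forall x, inI a b x -> continuous f x) -> inI a b s -> inI a b t -> s < t ->
  (f s - y) * (f t - y) < 0 -> exists z, inI a b z /\ f z = y.
Proof.
  intros Hc Hs Ht Hst Hsign.
  assert (Hty : f t - y <> 0) by (intros E; rewrite E in Hsign; lra).
  destruct (Ranalysis5.IVT_interv (fun z => (f t - y) * (f z - y)) s t)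
    as [z [Hz Hfz]]; [| exact Hst | lra | nra |].
  - intros x Hx. assert (HIx : inI a b x) by (unfold inI in *; lra).
    apply continuity_pt_filterlim, (continuous_Rmult (fun _ => f t - y) (fun z => f z - y));
      [apply continuous_const |].
    apply (continuous_Rplus f (fun _ => - y)); [exact (Hc x HIx) | apply continuous_const].
  - exists z; split; [unfold inI in *; lra |].
    apply Rmult_integral in Hfz as [E | E]; [contradiction | lra].
Qed.

Lemma continuous_two_valued_constant (a b p q : R) (f : R -> R) :
  (forall s, inI a b s -> continuous f s) ->
  (forall s, inI a b s -> f s = p \/ f s = q) ->
  forall s t, inI a b s -> inI a b t -> f t = f s.
Proof.
  intros Hc Hpq.
  assert (Hlt : forall s t, inI a b s -> inI a b t -> s < t -> f t = f s).
  { intros s t Hs Ht Hst. apply NNPP; intros Hne.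
    destruct (IVT_inI a b s t ((f s + f t) / 2) f Hc Hs Ht Hst) as [z [Hz Hfz]].
    - nra.
    - destruct (Hpq s Hs), (Hpq t Ht), (Hpq z Hz); lra. }
  intros s t Hs Ht.
  destruct (Rtotal_order s t) as [H | [-> | H]]; [now apply Hlt | reflexivity |].
  symmetry; now apply Hlt.
Qed.

Definition C1_on (a b : R) (f : R -> R) : Prop :=
  forall s, inI a b s -> ex_derive f s /\ continuous (Derive f) s.

Section C1Functions.

Variables (a b : R).

Lemma C1_on_continuous (f : R -> R) (s : R) : C1_on a b f -> inI a b s -> continuous f s.
Proof. intros Hf Hs; apply (ex_derive_continuous f), (Hf s Hs). Qed.

Lemma C1_on_ext (f g : R -> R) :
  (forall s, inI a b s -> f s = g s) -> C1_on a b f -> C1_on a b g.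
Proof.
  intros Hfg Hf.
  assert (Hloc : forall s, inI a b s -> locally s (fun t => f t = g t)).
  { intros s Hs; eapply filter_imp; [exact Hfg | exact (locally_inI a b s Hs)]. }
  intros s Hs; destruct (Hf s Hs) as [Hd Hc]; split.
  - exact (ex_derive_ext_loc f g s (Hloc s Hs) Hd).
  - apply (continuous_ext_loc _ (Derive f)); [| exact Hc].
    eapply filter_imp; [| exact (locally_inI a b s Hs)].
    intros t Ht; exact (Derive_ext_loc f g t (Hloc t Ht)).
Qed.

Lemma C1_on_plus (f g : R -> R) :
  C1_on a b f -> C1_on a b g -> C1_on a b (fun t => f t + g t).
Proof.
  intros Hf Hg s Hs; destruct (Hf s Hs) as [Hdf Hcf], (Hg s Hs) as [Hdg Hcg]; split.
  - exact (ex_derive_plus f g s Hdf Hdg).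
  - apply (continuous_ext_loc _ (fun t => Derive f t + Derive g t));
      [| now apply continuous_Rplus].
    eapply filter_imp; [| exact (locally_inI a b s Hs)].
    intros t Ht; symmetry; apply Derive_plus; [apply Hf | apply Hg]; exact Ht.
Qed.

Lemma C1_on_opp (f : R -> R) : C1_on a b f -> C1_on a b (fun t => - f t).
Proof.
  intros Hf s Hs; destruct (Hf s Hs) as [Hd Hc]; split.
  - exact (ex_derive_opp f s Hd).
  - apply (continuous_ext_loc _ (fun t => - Derive f t)); [| now apply continuous_Ropp].
    apply filter_forall; intros t; symmetry; apply Derive_opp.
Qed.

Lemma C1_on_minus (f g : R -> R) :
  C1_on a b f -> C1_on a b g -> C1_on a b (fun t => f t - g t).
Proof. intros Hf Hg; apply (C1_on_plus f (fun t => - g t)), C1_on_opp; assumption. Qed.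

Lemma C1_on_mult (f g : R -> R) :
  C1_on a b f -> C1_on a b g -> C1_on a b (fun t => f t * g t).
Proof.
  intros Hf Hg s Hs; destruct (Hf s Hs) as [Hdf Hcf], (Hg s Hs) as [Hdg Hcg]; split.
  - exact (ex_derive_mult f g s Hdf Hdg).
  - apply (continuous_ext_loc _ (fun t => Derive f t * g t + f t * Derive g t)).
    + eapply filter_imp; [| exact (locally_inI a b s Hs)].
      intros t Ht; symmetry; apply Derive_mult; [apply Hf | apply Hg]; exact Ht.
    + apply continuous_Rplus; apply continuous_Rmult; try assumption;
        [apply (ex_derive_continuous g) | apply (ex_derive_continuous f)]; assumption.
Qed.

End C1Functions.

(** * Vectors *)

Lemma vec3_eq (u w : vec3) : vx u = vx w -> vy u = vy w -> vz u = vz w -> u = w.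
Proof.
  destruct u as [[u1 u2] u3], w as [[w1 w2] w3]; unfold vx, vy, vz; simpl.
  intros -> -> ->; reflexivity.
Qed.

Ltac vec3_field := apply vec3_eq; unfold vadd, vscale, vx, vy, vz; simpl; field.

Lemma vdot_comm (x y : vec3) : vdot x y = vdot y x.
Proof. unfold vdot; ring. Qed.

Lemma vdot_addl (x y l : vec3) : vdot (vadd x y) l = vdot x l + vdot y l.
Proof. unfold vdot, vadd, vx, vy, vz; simpl; ring. Qed.

Lemma vdot_scalel (c : R) (x l : vec3) : vdot (vscale c x) l = c * vdot x l.
Proof. unfold vdot, vscale, vx, vy, vz; simpl; ring. Qed.

Lemma vdot_addr (x y l : vec3) : vdot l (vadd x y) = vdot l x + vdot l y.
Proof. rewrite vdot_comm, vdot_addl, !(vdot_comm l); reflexivity. Qed.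

Lemma vdot_scaler (c : R) (x l : vec3) : vdot l (vscale c x) = c * vdot l x.
Proof. rewrite vdot_comm, vdot_scalel, (vdot_comm l); reflexivity. Qed.

Lemma vdot_self_ge0 (x : vec3) : 0 <= vdot x x.
Proof. unfold vdot; nra. Qed.

Lemma vnorm_eq1 (x : vec3) : vnorm x = 1 <-> vdot x x = 1.
Proof.
  unfold vnorm; split; intros H.
  - rewrite <- (sqrt_sqrt (vdot x x)), H by apply vdot_self_ge0; ring.
  - rewrite H; apply sqrt_1.
Qed.

Lemma vdot_vcross_self (x y : vec3) :
  vdot (vcross y x) (vcross y x) = vdot y y * vdot x x - vdot x y ^ 2.
Proof.
  destruct x as [[x1 x2] x3], y as [[y1 y2] y3].
  unfold vdot, vcross, vx, vy, vz; simpl; ring.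
Qed.

Lemma vdot_vcross_l (x y : vec3) : vdot (vcross y x) y = 0.
Proof.
  destruct x as [[x1 x2] x3], y as [[y1 y2] y3].
  unfold vdot, vcross, vx, vy, vz; simpl; ring.
Qed.

Lemma vdot_vcross_r (x y : vec3) : vdot (vcross y x) x = 0.
Proof.
  destruct x as [[x1 x2] x3], y as [[y1 y2] y3].
  unfold vdot, vcross, vx, vy, vz; simpl; ring.
Qed.

(* The square of [vdot (vcross y x) l] is a 3x3 Gram determinant. *)
Lemma vcross_parseval (x y l : vec3) :
  vdot x x = 1 -> vdot y y = 1 -> vdot x y = 0 ->
  vdot x l ^ 2 + vdot (vcross y x) l ^ 2 + vdot y l ^ 2 = vdot l l.
Proof.
  intros Hx Hy Hxy.
  assert (Hgram : vdot (vcross y x) l ^ 2 =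
    vdot l l * (vdot y y * vdot x x - vdot x y ^ 2)
    - vdot y l * (vdot y l * vdot x x - vdot x y * vdot x l)
    + vdot x l * (vdot y l * vdot x y - vdot y y * vdot x l)).
  { destruct x as [[x1 x2] x3], y as [[y1 y2] y3], l as [[l1 l2] l3].
    unfold vdot, vcross, vx, vy, vz; simpl; ring. }
  rewrite Hgram, Hx, Hy, Hxy; ring.
Qed.

Definition Dv (f : R -> vec3) (t : R) : vec3 :=
  (Derive (fun u => vx (f u)) t, Derive (fun u => vy (f u)) t,
   Derive (fun u => vz (f u)) t).

Lemma vderiv_Dv (f : R -> vec3) (s : R) (d : vec3) : vderiv f s d -> Dv f s = d.
Proof.
  intros (Hx & Hy & Hz); apply vec3_eq; now apply is_derive_unique.
Qed.

Lemma vderiv_vdot_const (f : R -> vec3) (s : R) (d l : vec3) :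
  vderiv f s d -> is_derive (fun t => vdot (f t) l) s (vdot d l).
Proof.
  intros (Hx & Hy & Hz); unfold vdot.
  assert (Hc : forall c : R, is_derive (fun _ => c) s 0) by (intros c; apply (is_derive_const c)).
  eapply is_derive_eq.
  - apply is_derive_Rplus; [apply is_derive_Rplus |]; apply is_derive_Rmult;
      first [exact Hx | exact Hy | exact Hz | apply Hc].
  - cbv beta; ring.
Qed.

Lemma vderiv_eq (f : R -> vec3) (s : R) (d d' : vec3) :
  vderiv f s d -> d = d' -> vderiv f s d'.
Proof. intros H <-; exact H. Qed.

Lemma vderiv_vadd (f g : R -> vec3) (s : R) (df dg : vec3) :
  vderiv f s df -> vderiv g s dg -> vderiv (fun t => vadd (f t) (g t)) s (vadd df dg).
Proof.
  intros (Hfx & Hfy & Hfz) (Hgx & Hgy & Hgz); unfold vadd, vx, vy, vz in *; simpl.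
  split; [| split]; now apply is_derive_Rplus.
Qed.

Lemma vderiv_vscale (p : R -> R) (f : R -> vec3) (s dp : R) (df : vec3) :
  is_derive p s dp -> vderiv f s df ->
  vderiv (fun t => vscale (p t) (f t)) s (vadd (vscale dp (f s)) (vscale (p s) df)).
Proof.
  intros Hp (Hx & Hy & Hz); unfold vscale, vadd, vx, vy, vz in *; simpl.
  split; [| split]; now apply is_derive_Rmult.
Qed.

Lemma vderiv_ext_loc (f g : R -> vec3) (s : R) (d : vec3) :
  locally s (fun t => f t = g t) -> vderiv f s d -> vderiv g s d.
Proof.
  intros Hfg (Hx & Hy & Hz).
  split; [| split]; (eapply is_derive_ext_loc; [| eassumption]);
    eapply filter_imp; try exact Hfg; intros t ->; reflexivity.
Qed.

Definition vC1_on (a b : R) (f : R -> vec3) : Prop :=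
  C1_on a b (fun t => vx (f t)) /\ C1_on a b (fun t => vy (f t)) /\
  C1_on a b (fun t => vz (f t)).

Section VectorC1Functions.

Variables (a b : R).

Lemma ex_derive_n_C1_on (f : R -> R) :
  (forall n s, inI a b s -> ex_derive_n f n s) -> C1_on a b f /\ C1_on a b (Derive f).
Proof.
  intros Hf; split; intros s Hs; split.
  - exact (Hf 1%nat s Hs).
  - apply (ex_derive_continuous (Derive f)); exact (Hf 2%nat s Hs).
  - exact (Hf 2%nat s Hs).
  - apply (ex_derive_continuous (Derive (Derive f))); exact (Hf 3%nat s Hs).
Qed.

Lemma smooth_on_vC1_on (f : R -> vec3) :
  smooth_on a b f -> vC1_on a b f /\ vC1_on a b (Dv f).
Proof.
  intros Hf.
  destruct (ex_derive_n_C1_on (fun t => vx (f t))) as [Hx Hx'];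
    [intros n s Hs; apply (Hf n s Hs) |].
  destruct (ex_derive_n_C1_on (fun t => vy (f t))) as [Hy Hy'];
    [intros n s Hs; apply (Hf n s Hs) |].
  destruct (ex_derive_n_C1_on (fun t => vz (f t))) as [Hz Hz'];
    [intros n s Hs; apply (Hf n s Hs) |].
  split; (split; [| split]); assumption.
Qed.

Lemma vC1_on_ext (f g : R -> vec3) :
  (forall s, inI a b s -> f s = g s) -> vC1_on a b f -> vC1_on a b g.
Proof.
  intros Hfg (Hx & Hy & Hz).
  split; [| split];
    [apply (C1_on_ext a b (fun t => vx (f t))) | apply (C1_on_ext a b (fun t => vy (f t)))
    | apply (C1_on_ext a b (fun t => vz (f t)))];
    try assumption; intros s Hs; now rewrite Hfg.
Qed.

Lemma vC1_on_vdot (f g : R -> vec3) :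
  vC1_on a b f -> vC1_on a b g -> C1_on a b (fun t => vdot (f t) (g t)).
Proof.
  intros (Hfx & Hfy & Hfz) (Hgx & Hgy & Hgz); unfold vdot.
  apply C1_on_plus; [apply C1_on_plus |]; now apply C1_on_mult.
Qed.

Lemma vC1_on_vcross (f g : R -> vec3) :
  vC1_on a b f -> vC1_on a b g -> vC1_on a b (fun t => vcross (f t) (g t)).
Proof.
  intros (Hfx & Hfy & Hfz) (Hgx & Hgy & Hgz); unfold vcross, vx, vy, vz in *; simpl.
  split; [| split]; apply C1_on_minus; now apply C1_on_mult.
Qed.

End VectorC1Functions.

(** * Frenet frames *)

Section FrenetFrame.

Variables (a b : R) (t n w : R -> vec3) (k tau : R -> R).

Hypothesis a_lt_b : a < b.
Hypothesis frame_parseval : forall s l, inI a b s ->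
  vdot (t s) l ^ 2 + vdot (n s) l ^ 2 + vdot (w s) l ^ 2 = vdot l l.
Hypothesis w_unit : forall s, inI a b s -> vdot (w s) (w s) = 1.
Hypothesis t_deriv : forall s, inI a b s -> vderiv t s (vscale (k s) (n s)).
Hypothesis n_deriv : forall s, inI a b s ->
  vderiv n s (vadd (vscale (- k s) (t s)) (vscale (tau s) (w s))).
Hypothesis w_deriv : forall s, inI a b s -> vderiv w s (vscale (- tau s) (n s)).
Hypothesis k_pos : forall s, inI a b s -> 0 < k s.
Hypothesis k_cont : forall s, inI a b s -> continuous k s.
Hypothesis tau_cont : forall s, inI a b s -> continuous tau s.

Let mid_inI : inI a b ((a + b) / 2).
Proof. unfold inI; lra. Qed.

Lemma tangent_proj_derive (l : vec3) (s : R) : inI a b s ->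
  is_derive (fun u => vdot (t u) l) s (k s * vdot (n s) l).
Proof.
  intros Hs; eapply is_derive_eq; [exact (vderiv_vdot_const _ _ _ l (t_deriv s Hs)) |].
  apply vdot_scalel.
Qed.

Lemma normal_proj_derive (l : vec3) (s : R) : inI a b s ->
  is_derive (fun u => vdot (n u) l) s (- k s * vdot (t s) l + tau s * vdot (w s) l).
Proof.
  intros Hs; eapply is_derive_eq; [exact (vderiv_vdot_const _ _ _ l (n_deriv s Hs)) |].
  now rewrite vdot_addl, !vdot_scalel.
Qed.

Lemma binormal_proj_derive (l : vec3) (s : R) : inI a b s ->
  is_derive (fun u => vdot (w u) l) s (- tau s * vdot (n s) l).
Proof.
  intros Hs; eapply is_derive_eq; [exact (vderiv_vdot_const _ _ _ l (w_deriv s Hs)) |].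
  apply vdot_scalel.
Qed.

Lemma tangent_helix_binormal_helix : is_helix_along a b t -> is_helix_along a b w.
Proof.
  intros (l & c & Hl & Hc).
  assert (Hnl : forall s, inI a b s -> vdot (n s) l = 0).
  { intros s Hs.
    pose proof (is_derive_unique_val _ _ _ _ (tangent_proj_derive l s Hs)
      (is_derive_constant_on a b c s _ Hc Hs)) as E.
    apply Rmult_integral in E as [E | E]; [specialize (k_pos s Hs); lra | exact E]. }
  exists l, (vdot (w ((a + b) / 2)) l); split; [exact Hl |].
  intros s Hs; apply (is_derive_0_constant_on a b (fun u => vdot (w u) l));
    [| exact mid_inI | exact Hs].
  intros u Hu; eapply is_derive_eq; [exact (binormal_proj_derive l u Hu) |].
  rewrite (Hnl u Hu); ring.
Qed.

Section BinormalHelix.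

Variables (l : vec3) (c : R).
Hypothesis l_unit : vdot l l = 1.
Hypothesis binormal_proj : forall s, inI a b s -> vdot (w s) l = c.

Lemma torsion_normal_proj (s : R) : inI a b s -> tau s * vdot (n s) l = 0.
Proof.
  intros Hs.
  pose proof (is_derive_unique_val _ _ _ _ (binormal_proj_derive l s Hs)
    (is_derive_constant_on a b c s _ binormal_proj Hs)) as E.
  lra.
Qed.

Lemma tangent_proj_where_torsion_neq0 (s : R) : inI a b s -> tau s <> 0 ->
  vdot (n s) l = 0 /\ vdot (t s) l = tau s * c / k s.
Proof.
  intros Hs Htau.
  assert (Hnl : locally s (fun u => vdot (n u) l = 0)).
  { eapply filter_imp;
      [| exact (filter_and _ _ (locally_inI a b s Hs)
                  (continuous_locally_neq0 tau s (tau_cont s Hs) Htau))].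
    intros u [Hu Htu]; pose proof (torsion_normal_proj u Hu) as E.
    apply Rmult_integral in E as [E | E]; [contradiction | exact E]. }
  split; [exact (locally_singleton _ _ Hnl) |].
  pose proof (is_derive_unique_val _ _ _ _ (normal_proj_derive l s Hs)
    (is_derive_locally_constant _ s 0 Hnl)) as E.
  rewrite (binormal_proj s Hs) in E.
  assert (Hk : k s <> 0) by (specialize (k_pos s Hs); lra).
  apply (Rmult_eq_reg_l (k s)); [| exact Hk].
  replace (k s * (tau s * c / k s)) with (tau s * c) by (field; exact Hk); lra.
Qed.

Definition torsion_ratio (u : R) : R := tau u * c / k u.

Lemma torsion_ratio_continuous (s : R) : inI a b s -> continuous torsion_ratio s.
Proof.
  intros Hs; unfold torsion_ratio, Rdiv.
  apply (continuous_Rmult (fun u => tau u * c) (fun u => / k u)).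
  - apply (continuous_Rmult tau (fun _ => c)); [exact (tau_cont s Hs) | apply continuous_const].
  - apply continuous_Rinv_comp; [exact (k_cont s Hs) | specialize (k_pos s Hs); lra].
Qed.

Lemma torsion_ratio_sq (s : R) : inI a b s -> tau s <> 0 ->
  torsion_ratio s * torsion_ratio s = 1 - c ^ 2.
Proof.
  intros Hs Htau; destruct (tangent_proj_where_torsion_neq0 s Hs Htau) as [Hn Ht].
  pose proof (frame_parseval s l Hs) as P; unfold torsion_ratio.
  rewrite Hn, (binormal_proj s Hs), l_unit, Ht in P; lra.
Qed.

Lemma torsion_neq0_everywhere :
  (exists s1, inI a b s1 /\ tau s1 <> 0) -> forall s, inI a b s -> tau s <> 0.
Proof.
  intros (s1 & Hs1 & Htau1) s Hs Htau.
  assert (Hconst : torsion_ratio s * torsion_ratio s = torsion_ratio s1 * torsion_ratio s1).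
  { apply (continuous_two_valued_constant a b 0 (1 - c ^ 2)
      (fun u => torsion_ratio u * torsion_ratio u)); [| | exact Hs1 | exact Hs].
    - intros u Hu; apply (continuous_Rmult torsion_ratio torsion_ratio);
        now apply torsion_ratio_continuous.
    - intros u Hu; destruct (Req_dec (tau u) 0) as [H0 | H0]; [left | right].
      + unfold torsion_ratio; rewrite H0; unfold Rdiv; ring.
      + now apply torsion_ratio_sq. }
  assert (Hr : torsion_ratio s1 * torsion_ratio s1 = 0).
  { rewrite <- Hconst; unfold torsion_ratio; rewrite Htau; unfold Rdiv; ring. }
  assert (Hc : c ^ 2 = 1) by (rewrite (torsion_ratio_sq s1 Hs1 Htau1) in Hr; lra).
  assert (Htc : tau s1 * c = 0).
  { apply Rsqr_0_uniq in Hr; unfold torsion_ratio in Hr; specialize (k_pos s1 Hs1).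
    replace (tau s1 * c) with (tau s1 * c / k s1 * k s1) by (field; lra).
    rewrite Hr; ring. }
  apply Rmult_integral in Htc as [E | E]; [contradiction |].
  rewrite E in Hc; simpl in Hc; lra.
Qed.

End BinormalHelix.

Lemma binormal_helix_tangent_helix : is_helix_along a b w -> is_helix_along a b t.
Proof.
  intros (l & c & Hl & Hc); apply vnorm_eq1 in Hl.
  destruct (classic (exists s1, inI a b s1 /\ tau s1 <> 0)) as [Hex | Hnone].
  - assert (Hnl : forall s, inI a b s -> vdot (n s) l = 0).
    { intros s Hs; pose proof (torsion_normal_proj l c Hc s Hs) as E.
      apply Rmult_integral in E as [E | E];
        [exact (False_ind _ (torsion_neq0_everywhere l c Hl Hc Hex s Hs E)) | exact E]. }
    exists l, (vdot (t ((a + b) / 2)) l); split; [now apply vnorm_eq1 |].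
    intros s Hs; apply (is_derive_0_constant_on a b (fun u => vdot (t u) l));
      [| exact mid_inI | exact Hs].
    intros u Hu; eapply is_derive_eq; [exact (tangent_proj_derive l u Hu) |].
    rewrite (Hnl u Hu); ring.
  - set (w0 := w ((a + b) / 2)).
    assert (Hw0 : vdot w0 w0 = 1) by apply w_unit, mid_inI.
    assert (Hw : forall s, inI a b s -> vdot (w s) w0 = 1).
    { intros s Hs; rewrite <- Hw0.
      apply (is_derive_0_constant_on a b (fun u => vdot (w u) w0)); [| exact mid_inI | exact Hs].
      intros u Hu; eapply is_derive_eq; [exact (binormal_proj_derive w0 u Hu) |].
      destruct (Req_dec (tau u) 0) as [H0 | H0]; [rewrite H0; ring |].
      exfalso; apply Hnone; exists u; split; assumption. }
    exists w0, 0; split; [now apply vnorm_eq1 |].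
    intros s Hs; pose proof (frame_parseval s w0 Hs) as P.
    rewrite (Hw s Hs), Hw0 in P; nra.
Qed.

Lemma tangent_helix_iff_binormal_helix : is_helix_along a b t <-> is_helix_along a b w.
Proof. split; [exact tangent_helix_binormal_helix | exact binormal_helix_tangent_helix]. Qed.

End FrenetFrame.

(** * The Frenet frame of mu in a Myller configuration *)

Section MyllerFrame.

Variables (a b : R) (r xi mu v : R -> vec3) (G K T : R -> R).

Hypothesis config : myller_config a b r xi mu v G K T.
Hypothesis GT_neq0 : forall s, inI a b s -> (G s, T s) <> (0, 0).

Let frame_at := proj2 (proj2 (proj2 config)).

Lemma xi_unit (s : R) : inI a b s -> vdot (xi s) (xi s) = 1.
Proof. intros Hs; apply vnorm_eq1, (frame_at s Hs). Qed.

Lemma v_unit (s : R) : inI a b s -> vdot (v s) (v s) = 1.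
Proof. intros Hs; apply vnorm_eq1, (frame_at s Hs). Qed.

Lemma xi_v_orth (s : R) : inI a b s -> vdot (xi s) (v s) = 0.
Proof. intros Hs; apply (frame_at s Hs). Qed.

Lemma mu_vcross (s : R) : inI a b s -> mu s = vcross (v s) (xi s).
Proof. intros Hs; apply (frame_at s Hs). Qed.

Lemma xi_deriv (s : R) : inI a b s ->
  vderiv xi s (vadd (vscale (G s) (mu s)) (vscale (K s) (v s))).
Proof. intros Hs; apply (frame_at s Hs). Qed.

Lemma mu_deriv (s : R) : inI a b s ->
  vderiv mu s (vadd (vscale (- G s) (xi s)) (vscale (T s) (v s))).
Proof. intros Hs; apply (frame_at s Hs). Qed.

Lemma v_deriv (s : R) : inI a b s ->
  vderiv v s (vadd (vscale (- K s) (xi s)) (vscale (- T s) (mu s))).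
Proof. intros Hs; apply (frame_at s Hs). Qed.

Lemma mu_unit (s : R) : inI a b s -> vdot (mu s) (mu s) = 1.
Proof.
  intros Hs; rewrite mu_vcross, vdot_vcross_self, xi_unit, v_unit, xi_v_orth by exact Hs.
  ring.
Qed.

Lemma xi_mu_v_parseval (s : R) (l : vec3) : inI a b s ->
  vdot (xi s) l ^ 2 + vdot (mu s) l ^ 2 + vdot (v s) l ^ 2 = vdot l l.
Proof.
  intros Hs; rewrite mu_vcross by exact Hs.
  apply vcross_parseval; [apply xi_unit | apply v_unit | apply xi_v_orth]; exact Hs.
Qed.

Lemma invariants_vdot (s : R) : inI a b s ->
  G s = vdot (Dv xi s) (mu s) /\ K s = vdot (Dv xi s) (v s) /\
  T s = - vdot (Dv v s) (mu s).
Proof.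
  intros Hs.
  rewrite (vderiv_Dv _ _ _ (xi_deriv s Hs)), (vderiv_Dv _ _ _ (v_deriv s Hs)).
  rewrite !vdot_addl, !vdot_scalel, mu_unit, v_unit by exact Hs.
  rewrite (vdot_comm (v s)), (vdot_comm (xi s)), mu_vcross, vdot_vcross_l, vdot_vcross_r
    by exact Hs.
  repeat split; ring.
Qed.

Lemma myller_vC1_on : vC1_on a b xi /\ vC1_on a b (Dv xi) /\ vC1_on a b v /\
  vC1_on a b (Dv v) /\ vC1_on a b mu.
Proof.
  destruct (smooth_on_vC1_on a b xi (proj1 (proj2 config))) as [Hxi HDxi].
  destruct (smooth_on_vC1_on a b v (proj1 (proj2 (proj2 config)))) as [Hv HDv].
  repeat (split; [assumption |]).
  apply (vC1_on_ext a b (fun t => vcross (v t) (xi t))); [| now apply vC1_on_vcross].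
  intros s Hs; symmetry; now apply mu_vcross.
Qed.

Lemma invariants_C1_on : C1_on a b G /\ C1_on a b K /\ C1_on a b T.
Proof.
  destruct myller_vC1_on as (Hxi & HDxi & Hv & HDv & Hmu).
  split; [| split].
  - apply (C1_on_ext a b (fun t => vdot (Dv xi t) (mu t))); [| now apply vC1_on_vdot].
    intros s Hs; symmetry; apply (invariants_vdot s Hs).
  - apply (C1_on_ext a b (fun t => vdot (Dv xi t) (v t))); [| now apply vC1_on_vdot].
    intros s Hs; symmetry; apply (invariants_vdot s Hs).
  - apply (C1_on_ext a b (fun t => - vdot (Dv v t) (mu t))); [| now apply C1_on_opp, vC1_on_vdot].
    intros s Hs; symmetry; apply (invariants_vdot s Hs).
Qed.

Definition Wr_len (u : R) : R := sqrt (T u ^ 2 + G u ^ 2).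

Definition mu_normal (u : R) : vec3 :=
  vscale (/ Wr_len u) (vadd (vscale (- G u) (xi u)) (vscale (T u) (v u))).

Definition Wr_torsion (u : R) : R :=
  - (K u + (T u * Derive G u - G u * Derive T u) / (T u ^ 2 + G u ^ 2)).

Lemma GT_sq_pos (s : R) : inI a b s -> 0 < T s ^ 2 + G s ^ 2.
Proof.
  intros Hs.
  destruct (Req_dec (G s) 0) as [HG | HG]; [| nra].
  destruct (Req_dec (T s) 0) as [HT | HT]; [| nra].
  exfalso; apply (GT_neq0 s Hs); now rewrite HG, HT.
Qed.

Lemma Wr_len_pos (s : R) : inI a b s -> 0 < Wr_len s.
Proof. intros Hs; apply sqrt_lt_R0, GT_sq_pos, Hs. Qed.

Lemma Wr_len_sq (s : R) : inI a b s -> Wr_len s ^ 2 = T s ^ 2 + G s ^ 2.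
Proof. intros Hs; apply pow2_sqrt; specialize (GT_sq_pos s Hs); lra. Qed.

Lemma Wr_vdot_self (s : R) : inI a b s ->
  vdot (Wr xi v G T s) (Wr xi v G T s) = T s ^ 2 + G s ^ 2.
Proof.
  intros Hs; unfold Wr.
  rewrite !vdot_addl, !vdot_addr, !vdot_scalel, !vdot_scaler, (vdot_comm (v s)).
  rewrite xi_unit, v_unit, xi_v_orth by exact Hs; ring.
Qed.

Lemma Wr_bar_eq (s : R) : inI a b s ->
  Wr_bar xi v G T s = vscale (/ Wr_len s) (Wr xi v G T s).
Proof. intros Hs; unfold Wr_bar, vnorm; now rewrite Wr_vdot_self. Qed.

Lemma Wr_bar_unit (s : R) : inI a b s -> vdot (Wr_bar xi v G T s) (Wr_bar xi v G T s) = 1.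
Proof.
  intros Hs; specialize (Wr_len_pos s Hs) as Hm.
  rewrite Wr_bar_eq, vdot_scalel, vdot_scaler, Wr_vdot_self, <- Wr_len_sq by exact Hs.
  field; lra.
Qed.

Lemma mu_frenet_parseval (s : R) (l : vec3) : inI a b s ->
  vdot (mu s) l ^ 2 + vdot (mu_normal s) l ^ 2 + vdot (Wr_bar xi v G T s) l ^ 2 = vdot l l.
Proof.
  intros Hs; specialize (Wr_len_pos s Hs) as Hm.
  rewrite <- (xi_mu_v_parseval s l Hs), Wr_bar_eq by exact Hs.
  unfold mu_normal, Wr; rewrite !vdot_scalel, !vdot_addl, !vdot_scalel.
  set (al := vdot (xi s) l); set (ga := vdot (v s) l).
  assert (E : (/ Wr_len s * (- G s * al + T s * ga)) ^ 2 + (/ Wr_len s * (T s * al + G s * ga)) ^ 2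
    = (T s ^ 2 + G s ^ 2) / Wr_len s ^ 2 * (al ^ 2 + ga ^ 2)) by (field; lra).
  rewrite <- Wr_len_sq in E by exact Hs.
  replace (Wr_len s ^ 2 / Wr_len s ^ 2) with 1 in E by (field; lra).
  lra.
Qed.

Lemma inv_Wr_len_derive (s : R) : inI a b s ->
  is_derive (fun u => / Wr_len u) s
    (- (T s * Derive T s + G s * Derive G s) / (Wr_len s * (T s ^ 2 + G s ^ 2))).
Proof.
  intros Hs; destruct invariants_C1_on as (HG & _ & HT).
  specialize (Wr_len_pos s Hs) as Hm; specialize (GT_sq_pos s Hs) as Hq.
  assert (Hdq : is_derive (fun u => T u ^ 2 + G u ^ 2) s
                  (2 * (T s * Derive T s + G s * Derive G s))).
  { eapply is_derive_eq.
    - apply is_derive_Rplus; apply is_derive_pow, Derive_correct; [apply HT | apply HG]; exact Hs.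
    - simpl; ring. }
  eapply is_derive_eq; [exact (is_derive_inv_sqrt _ s _ Hdq Hq) |].
  cbv beta; fold (Wr_len s); field; split; lra.
Qed.

Lemma mu_deriv_frenet (s : R) : inI a b s -> vderiv mu s (vscale (Wr_len s) (mu_normal s)).
Proof.
  intros Hs; specialize (Wr_len_pos s Hs) as Hm.
  eapply vderiv_eq; [exact (mu_deriv s Hs) |].
  unfold mu_normal; vec3_field; lra.
Qed.

Lemma mu_normal_deriv (s : R) : inI a b s ->
  vderiv mu_normal s
    (vadd (vscale (- Wr_len s) (mu s)) (vscale (Wr_torsion s) (Wr_bar xi v G T s))).
Proof.
  intros Hs; destruct invariants_C1_on as (HG & _ & HT).
  specialize (Wr_len_pos s Hs) as Hm; specialize (GT_sq_pos s Hs) as Hq.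
  eapply vderiv_eq.
  { apply (vderiv_vscale (fun u => / Wr_len u)
      (fun u => vadd (vscale (- G u) (xi u)) (vscale (T u) (v u))));
      [exact (inv_Wr_len_derive s Hs) |].
    apply vderiv_vadd; apply vderiv_vscale;
      [apply is_derive_Ropp, Derive_correct, HG, Hs | exact (xi_deriv s Hs)
      | apply Derive_correct, HT, Hs | exact (v_deriv s Hs)]. }
  rewrite Wr_bar_eq by exact Hs.
  (* the [mu]-coefficient on the left is [- (T^2 + G^2) / Wr_len] *)
  replace (- Wr_len s) with (- (T s ^ 2 + G s ^ 2) / Wr_len s)
    by (rewrite <- Wr_len_sq by exact Hs; field; lra).
  unfold Wr_torsion, Wr; vec3_field; split; lra.
Qed.

Lemma Wr_bar_deriv (s : R) : inI a b s ->
  vderiv (Wr_bar xi v G T) s (vscale (- Wr_torsion s) (mu_normal s)).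
Proof.
  intros Hs; destruct invariants_C1_on as (HG & _ & HT).
  specialize (Wr_len_pos s Hs) as Hm; specialize (GT_sq_pos s Hs) as Hq.
  apply (vderiv_ext_loc (fun u => vscale (/ Wr_len u) (Wr xi v G T u))).
  { eapply filter_imp; [| exact (locally_inI a b s Hs)].
    intros u Hu; symmetry; exact (Wr_bar_eq u Hu). }
  eapply vderiv_eq.
  { apply (vderiv_vscale (fun u => / Wr_len u) (Wr xi v G T));
      [exact (inv_Wr_len_derive s Hs) |].
    apply vderiv_vadd; apply vderiv_vscale;
      [apply Derive_correct, HT, Hs | exact (xi_deriv s Hs)
      | apply Derive_correct, HG, Hs | exact (v_deriv s Hs)]. }
  unfold mu_normal, Wr_torsion, Wr; vec3_field; split; lra.
Qed.

Lemma Wr_len_continuous (s : R) : inI a b s -> continuous Wr_len s.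
Proof.
  intros Hs; destruct invariants_C1_on as (HG & _ & HT).
  apply continuous_sqrt_comp, continuous_Rplus; apply continuous_Rsqr;
    [apply (C1_on_continuous a b T) | apply (C1_on_continuous a b G)]; assumption.
Qed.

Lemma Wr_torsion_continuous (s : R) : inI a b s -> continuous Wr_torsion s.
Proof.
  intros Hs; destruct invariants_C1_on as (HG & HK & HT).
  specialize (GT_sq_pos s Hs) as Hq.
  assert (HcG : continuous G s) by now apply (C1_on_continuous a b).
  assert (HcT : continuous T s) by now apply (C1_on_continuous a b).
  apply continuous_Ropp, continuous_Rplus; [now apply (C1_on_continuous a b) |].
  apply (continuous_Rmult (fun u => T u * Derive G u - G u * Derive T u)
                          (fun u => / (T u ^ 2 + G u ^ 2))).
  - apply continuous_Rminus; apply continuous_Rmult;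
      first [assumption | apply (HG s Hs) | apply (HT s Hs)].
  - apply continuous_Rinv_comp; [| lra].
    apply continuous_Rplus; now apply continuous_Rsqr.
Qed.

End MyllerFrame.

Theorem theorem21 (a b : R) (r xi mu v : R -> vec3) (G K T : R -> R) :
  a < b ->
  myller_config a b r xi mu v G K T ->
  (forall s, inI a b s -> (G s, T s) <> (0, 0)) ->
  (Wr_helix a b xi v G T <-> mu_helix a b mu).
Proof.
  intros Hab Hcfg HGT; unfold Wr_helix, mu_helix; symmetry.
  apply (tangent_helix_iff_binormal_helix a b mu (mu_normal xi v G T) (Wr_bar xi v G T)
           (Wr_len G T) (Wr_torsion G K T)).
  - exact Hab.
  - intros *; eapply mu_frenet_parseval; eassumption.
  - intros *; eapply Wr_bar_unit; eassumption.
  - intros *; eapply mu_deriv_frenet; eassumption.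
  - intros *; eapply mu_normal_deriv; eassumption.
  - intros *; eapply Wr_bar_deriv; eassumption.
  - intros *; eapply Wr_len_pos; eassumption.
  - intros *; eapply Wr_len_continuous; eassumption.
  - intros *; eapply Wr_torsion_continuous; eassumption.
Qed.
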